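(* Let $H^T_{\mathbb{FC}}$ be the mapping on the running-time semantics of flowcharts defined in the context. Then $H^T_{\mathbb{FC}}$ is a verification functor: for all flowcharts $A,B$, $H^T_{\mathbb{FC}}([\![\mathsf{Seq}(A,B)]\!]) = H^T_{\mathbb{FC}}([\![B]\!])\circ H^T_{\mathbb{FC}}([\![A]\!])$, $H^T_{\mathbb{FC}}([\![\mathsf{Par}(A,B)]\!]) = H^T_{\mathbb{FC}}([\![A]\!])\times H^T_{\mathbb{FC}}([\![B]\!])$, and whenever $[\![A]\!]:\Sigma^{n}\uplus\Sigma^{k}\to\Sigma^{m}\uplus\Sigma^{k}$, for all $P:\Sigma^n\to\mathbb{N}^\infty$, $R:\Sigma^m\to\mathbb{N}^\infty$: $(P,R)\in H^T_{\mathbb{FC}}([\![\mathsf{Fb}(A)]\!])$ iff there is $Q:\Sigma^k\to\mathbb{N}^\infty$ with $((P,Q),(R,Q))\in H^T_{\mathbb{FC}}([\![A]\!])$.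
   Context: $\Sigma=\mathsf{Store}$ is the set of maps from program variables to $\mathbb{Z}$, and $\Sigma^n=\Sigma\uplus\dots\uplus\Sigma$ ($n$ summands). Flowcharts are built from basic flowcharts — identity, assignment $x:=t$, join $\Delta:\Sigma\uplus\Sigma\to\Sigma$, twist on $\Sigma\uplus\Sigma$, conditional fork $\mathrm{cond}_b:\Sigma\to\Sigma\uplus\Sigma$ (sending $\rho$ to the left summand if $\neg b_\rho$, to the right otherwise) — by sequential composition $\mathsf{Seq}$, parallel composition $\mathsf{Par}$ (disjoint union) and feedback $\mathsf{Fb}$ (the disjoint-union trace: iterate the flowchart, feeding outputs in the last summand back into the last input summand until an output lands in the first summands). The running time of a flowchart on a terminating input is the number of evaluations of non-neutral basic operations (every basic flowchart except identity and twist counts one step); the semantics $[\![A]\!]$ identifies two flowcharts iff they have the same input–output partial function and the same running time on all terminating inputs. $\mathbb{N}^\infty=\mathbb{N}\cup\{\infty\}$ with $n\le\infty$ and $n+\infty=\infty$. $H^T_{\mathbb{FC}}(\Sigma^n)$ is the set of functions $\Sigma^n\to\mathbb{N}^\infty$ (equivalently $n$-tuples of functions $\Sigma\to\mathbb{N}^\infty$, so $H^T_{\mathbb{FC}}(\Sigma^n\uplus\Sigma^m)=H^T_{\mathbb{FC}}(\Sigma^n)\times H^T_{\mathbb{FC}}(\Sigma^m)$), pre-ordered pointwise. For a flowchart $A$ with $[\![A]\!]:\Sigma^n\to\Sigma^m$ and $Q:\Sigma^m\to\mathbb{N}^\infty$, the relative running time $\mathsf{RRT}(A,Q):\Sigma^n\to\mathbb{N}^\infty$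 is $\infty$ at $\rho$ if $A$ does not terminate on $\rho$, and otherwise $\mathsf{RunTime}(A,\rho)+Q([\![A]\!](\rho))$. Define $(P,Q)\in H^T_{\mathbb{FC}}([\![A]\!])$ iff $P(\rho)\ge\mathsf{RRT}(A,Q)(\rho)$ for all $\rho$. Composition and product of relations are the usual relational ones. *)

From Stdlib Require Import ZArith ClassicalEpsilon.
From mathcomp Require Import all_boot.

Set Implicit Arguments.
Unset Strict Implicit.
Unset Printing Implicit Defensive.

Definition var := nat.
Definition Store := var -> Z.
Definition upd (s : Store) (x : var) (v : Z) : Store :=
  fun y => if y == x then v else s y.

(* An element of Sigma^n = Sigma (+) ... (+) Sigma is a pair (i, rho) with
   i : 'I_n the summand and rho : Store.  Sigma^n (+) Sigma^k is identified
   with Sigma^(n+k) via lshift / rshift / split. *)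

Inductive fc : nat -> nat -> Type :=
| FId     : fc 1 1
| FAssign : var -> (Store -> Z) -> fc 1 1
| FJoin   : fc 2 1
| FTwist  : fc 2 2
| FCond   : (Store -> bool) -> fc 1 2
| Seq     : forall n m p, fc n m -> fc m p -> fc n p
| Par     : forall n m n' m', fc n m -> fc n' m' -> fc (n + n') (m + m')
| Fb      : forall n m k, fc (n + k) (m + k) -> fc n m.

Definition twist (i : 'I_2) : 'I_2 := rev_ord i.

(* ---------- Operational (running-time) semantics ----------
   exec A i s j s' t : A started in summand i with store s terminates in
   output summand j with store s' after t non-neutral basic steps. *)
Inductive exec : forall n m, fc n m -> 'I_n -> Store -> 'I_m -> Store -> nat -> Prop :=
| exec_id : forall s, exec FId ord0 s ord0 s 0
| exec_assign : forall x t s, exec (FAssign x t) ord0 s ord0 (upd s x (t s)) 1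
| exec_join : forall (i : 'I_2) s, exec FJoin i s ord0 s 1
| exec_twist : forall (i : 'I_2) s, exec FTwist i s (twist i) s 0
| exec_cond : forall b s,
    exec (FCond b) ord0 s (if b s then ord_max else ord0) s 1
| exec_seq : forall n m p (A : fc n m) (B : fc m p) i s j s' t k s'' u,
    exec A i s j s' t -> exec B j s' k s'' u -> exec (Seq A B) i s k s'' (t + u)
| exec_parl : forall n m n' m' (A : fc n m) (B : fc n' m') i s j s' t,
    exec A i s j s' t -> exec (Par A B) (lshift n' i) s (lshift m' j) s' t
| exec_parr : forall n m n' m' (A : fc n m) (B : fc n' m') i s j s' t,
    exec B i s j s' t -> exec (Par A B) (rshift n i) s (rshift m j) s' t
| exec_fb : forall n m k (A : fc (n + k) (m + k)) i s j s' t,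
    fbrun A (lshift k i) s j s' t -> exec (Fb A) i s j s' t
(* iteration of the feedback loop: outputs in the last k summands are fed
   back into the last k input summands until an output lands in the first m *)
with fbrun : forall n m k, fc (n + k) (m + k) ->
                'I_(n + k) -> Store -> 'I_m -> Store -> nat -> Prop :=
| fb_done : forall n m k (A : fc (n + k) (m + k)) i s j s' t,
    exec A i s (lshift k j) s' t -> fbrun A i s j s' t
| fb_again : forall n m k (A : fc (n + k) (m + k)) i s l s' t j s'' u,
    exec A i s (rshift m l) s' t -> fbrun A (rshift n l) s' j s'' u ->
    fbrun A i s j s'' (t + u).

(* The semantics [[A]] : the input/output partial function together with the
   running time (a graph relation; it is functional). *)
Definition Sem (n m : nat) := 'I_n -> Store -> 'I_m -> Store -> nat -> Prop.
Definition denote n m (A : fc n m) : Sem n m := @exec n m A.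

Inductive ninf := Fin of nat | Inf.
Definition nadd (a b : ninf) : ninf :=
  match a, b with Fin x, Fin y => Fin (x + y)%N | _, _ => Inf end.
Definition nle (a b : ninf) : Prop :=
  match a, b with
  | _, Inf => True
  | Fin x, Fin y => (x <= y)%N
  | Inf, Fin _ => False
  end.

Definition pre (n : nat) := 'I_n -> Store -> ninf.

Definition RRT n m (f : Sem n m) (Q : pre m) (i : 'I_n) (s : Store) : ninf :=
  match excluded_middle_informative
          (exists r : 'I_m * Store * nat, f i s r.1.1 r.1.2 r.2) with
  | left h =>
      let r := proj1_sig (constructive_indefinite_description _ h) in
      nadd (Fin r.2) (Q r.1.1 r.1.2)
  | right _ => Inf
  end.

Definition HT n m (f : Sem n m) (P : pre n) (Q : pre m) : Prop :=
  forall i s, nle (RRT f Q i s) (P i s).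

Definition rel_comp n m p (R : pre n -> pre m -> Prop) (S : pre m -> pre p -> Prop)
  (P : pre n) (T : pre p) : Prop := exists Q, R P Q /\ S Q T.

(* H(Sigma^n (+) Sigma^k) = H(Sigma^n) x H(Sigma^k) *)
Definition pleft n k (P : pre (n + k)) : pre n := fun i => P (lshift k i).
Definition pright n k (P : pre (n + k)) : pre k := fun i => P (rshift n i).
Definition pjoin n k (P : pre n) (Q : pre k) : pre (n + k) :=
  fun i => match split i with inl j => P j | inr j => Q j end.

Definition rel_prod n m n' m' (R1 : pre n -> pre m -> Prop) (R2 : pre n' -> pre m' -> Prop)
  (P : pre (n + n')) (Q : pre (m + m')) : Prop :=
  R1 (pleft P) (pleft Q) /\ R2 (pright P) (pright Q).

(* Seq and Par are compositional because RRT (Seq A B) R = RRT A (RRT B R) and the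
   relative running time of Par A B splits along the two summands; both rest on runs
   being deterministic.  For Fb, the relative running time of the loop from each
   feedback entry is the required loop invariant Q.  Conversely, given Q, one pass
   through A strictly decreases Q unless it costs nothing.  Zero-cost runs only go
   through identities and twists, so a zero-cost run into a summand is the only run into
   it; hence a cycle of zero-cost passes can never be entered from an input, and a
   descent on Q, then on the number of feedback entries reachable by zero-cost passes,
   shows that the loop terminates whenever P is finite. *)

From mathcomp Require Import all_boot.
From mathcomp Require Import zify.
From Stdlib Require Import ClassicalEpsilon Eqdep_dec Relation_Operators Operators_Properties.

Set Implicit Arguments.
Unset Strict Implicit.
Unset Printing Implicit Defensive.

Ltac inv_exec H :=
  inversion H;
  repeat (first [ progress subst
                | match goal with E : existT _ _ _ = existT _ _ _ |- _ =>
                    apply inj_pair2_eq_dec in E; [|exact PeanoNat.Nat.eq_dec] end ]).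

Variant lr_spec a b : 'I_(a + b) -> Type :=
| LShift (i : 'I_a) : lr_spec (lshift b i)
| RShift (j : 'I_b) : lr_spec (rshift a j).

Lemma lrP a b (x : 'I_(a + b)) : lr_spec x.
Proof. by rewrite -(splitK x); case: (split x) => y; constructor. Qed.

Lemma lrshift_neq a b (i : 'I_a) (j : 'I_b) : lshift b i <> rshift a j.
Proof. by move=> E; move: (eq_lrshift i j); rewrite E eqxx. Qed.

Lemma pjoin_l a b (P : pre a) (Q : pre b) i : pjoin P Q (lshift b i) = P i.
Proof. by rewrite /pjoin -[lshift b i]/(unsplit (inl i)) unsplitK. Qed.

Lemma pjoin_r a b (P : pre a) (Q : pre b) j : pjoin P Q (rshift a j) = Q j.
Proof. by rewrite /pjoin -[rshift a j]/(unsplit (inr j)) unsplitK. Qed.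

Lemma exec_id_inv i s j s' t : exec FId i s j s' t -> [/\ j = i, s' = s & t = 0].
Proof. by move=> H; inv_exec H. Qed.

Lemma exec_assign_inv x e i s j s' t :
  exec (FAssign x e) i s j s' t -> [/\ j = i, s' = upd s x (e s) & t = 1].
Proof. by move=> H; inv_exec H. Qed.

Lemma exec_join_inv i s j s' t : exec FJoin i s j s' t -> [/\ j = ord0, s' = s & t = 1].
Proof. by move=> H; inv_exec H. Qed.

Lemma exec_twist_inv i s j s' t : exec FTwist i s j s' t -> [/\ j = twist i, s' = s & t = 0].
Proof. by move=> H; inv_exec H. Qed.

Lemma exec_cond_inv b i s j s' t :
  exec (FCond b) i s j s' t -> [/\ j = (if b s then ord_max else ord0), s' = s & t = 1].
Proof. by move=> H; inv_exec H. Qed.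

Lemma exec_seq_inv n m p (A : fc n m) (B : fc m p) i s k s'' t :
  exec (Seq A B) i s k s'' t ->
  exists j s' t1 t2, [/\ exec A i s j s' t1, exec B j s' k s'' t2 & t = t1 + t2].
Proof. by move=> H; inv_exec H; do 4 eexists; split; eauto. Qed.

Lemma exec_par_inv n m n' m' (A : fc n m) (B : fc n' m') i s o s' t :
  exec (Par A B) i s o s' t ->
  (exists i0 j, [/\ i = lshift n' i0, o = lshift m' j & exec A i0 s j s' t]) \/
  (exists i0 j, [/\ i = rshift n i0, o = rshift m j & exec B i0 s j s' t]).
Proof. by move=> H; inv_exec H; [left|right]; do 2 eexists; split; eauto. Qed.

Lemma exec_fb_inv n m k (A : fc (n + k) (m + k)) i s j s' t :
  exec (Fb A) i s j s' t -> fbrun A (lshift k i) s j s' t.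
Proof. by move=> H; inv_exec H. Qed.

Lemma fbrun_inv n m k (A : fc (n + k) (m + k)) x s j s' t :
  fbrun A x s j s' t ->
  exec A x s (lshift k j) s' t \/
  exists l s1 t1 t2,
    [/\ exec A x s (rshift m l) s1 t1, fbrun A (rshift n l) s1 j s' t2 & t = t1 + t2].
Proof. by move=> H; inv_exec H; [left|right; do 4 eexists; split; eauto]. Qed.

Definition functional n m (f : Sem n m) := forall i s j s' t j' s'' t',
  f i s j s' t -> f i s j' s'' t' -> [/\ j' = j, s'' = s' & t' = t].

Definition cost0_backward_unique n m (f : Sem n m) := forall i s j s' i' s2 s2' t,
  f i s j s' 0 -> f i' s2 j s2' t -> i' = i.

Lemma fbrun_functional n m k (A : fc (n + k) (m + k)) :
  functional (denote A) -> functional (fbrun A).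
Proof.
move=> detA x s j s' t j2 s2 t2 F; elim: F detA j2 s2 t2 => {n m k A x s j s' t}.
- move=> n m k A x s j s' t E detA j2 s2 t2 /fbrun_inv [E2|[l [s1 [t1 [u [E2 _ _]]]]]].
  + by case: (detA _ _ _ _ _ _ _ _ E E2) => /lshift_inj.
  + by case: (detA _ _ _ _ _ _ _ _ E E2) => /esym/lrshift_neq.
- move=> n m k A x s l s1 t j s' u E _ IH detA j2 s2 t2.
  case/fbrun_inv => [E2|[l2 [s3 [t1 [u2 [E2 F2 ->]]]]]].
  + by case: (detA _ _ _ _ _ _ _ _ E E2) => /lrshift_neq.
  + case: (detA _ _ _ _ _ _ _ _ E E2) => /rshift_inj ? ? ?; subst.
    by case: (IH detA _ _ _ F2) => -> -> ->.
Qed.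

Definition fb_next n m k (A : fc (n + k) (m + k)) (x y : 'I_(n + k)) :=
  exists l s s' t, y = rshift n l /\ exec A x s (rshift m l) s' t.

Notation fb_reach A := (clos_refl_trans _ (fb_next A)).

Lemma fb_reachE n m k (A : fc (n + k) (m + k)) x y :
  fb_reach A x y -> y = x \/ exists2 w, fb_reach A x w & fb_next A w y.
Proof.
move=> /(@clos_rt_rtn1 _ _ _ _) [|w y' Hw Hxw]; first by left.
by right; exists w => //; apply: clos_rtn1_rt.
Qed.

Lemma fbrun_exit_reachable n m k (A : fc (n + k) (m + k)) x s j s' t :
  fbrun A x s j s' t ->
  exists z s1 s1' t1, fb_reach A x z /\ exec A z s1 (lshift k j) s1' t1.
Proof.
elim => {n m k A x s j s' t}.
- by move=> n m k A x s j s' t E; exists x, s, s', t; split=> //; apply: rt_refl.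
- move=> n m k A x s l s1 t j s' u E _ [z [s2 [s2' [t2 [Hz Ez]]]]].
  exists z, s2, s2', t2; split=> //.
  by apply: rt_trans Hz; apply: rt_step; exists l, s, s1, t.
Qed.

Lemma fbrun_cost0_reach n m k (A : fc (n + k) (m + k)) x s j s' t y z s1 s1' t1 :
  fbrun A x s j s' t -> t = 0 -> cost0_backward_unique (denote A) ->
  fb_reach A y z -> exec A z s1 (lshift k j) s1' t1 ->
  fb_reach A y x \/ exists l, y = rshift n l.
Proof.
move=> F; elim: F y z s1 s1' t1 => {n m k A x s j s' t}.
- move=> n m k A x s j s' t E y z s1 s1' t1 t0 uniqA Hyz Ez; subst t.
  by left; rewrite -(uniqA _ _ _ _ _ _ _ _ E Ez).
- move=> n m k A x s l s1 t j s' u E _ IH y z s2 s2' t2.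
  move=> /eqP; rewrite addn_eq0 => /andP[/eqP t0 /eqP u0] uniqA Hyz Ez; subst t u.
  case: (IH _ _ _ _ _ erefl uniqA Hyz Ez) => [/fb_reachE [Ey|[w Hyw [l' [s3 [s3' [t3 []]]]]]]|];
    [by right; exists l | | by right].
  move=> /rshift_inj <- Ew; left.
  by rewrite -(uniqA _ _ _ _ _ _ _ _ E Ew).
Qed.

Lemma exec_functional n m (A : fc n m) : functional (denote A).
Proof.
elim: A => {n m}.
- by move=> i s j s' t j2 s2 t2 /exec_id_inv[-> -> ->] /exec_id_inv[-> -> ->].
- by move=> x e i s j s' t j2 s2 t2 /exec_assign_inv[-> -> ->] /exec_assign_inv[-> -> ->].
- by move=> i s j s' t j2 s2 t2 /exec_join_inv[-> -> ->] /exec_join_inv[-> -> ->].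
- by move=> i s j s' t j2 s2 t2 /exec_twist_inv[-> -> ->] /exec_twist_inv[-> -> ->].
- by move=> b i s j s' t j2 s2 t2 /exec_cond_inv[-> -> ->] /exec_cond_inv[-> -> ->].
- move=> n m p A detA B detB i s k s' t k2 s2 t2.
  case/exec_seq_inv => [j [s1 [t1 [u [EA EB ->]]]]].
  case/exec_seq_inv => [j2 [s3 [t3 [u3 [EA2 EB2 ->]]]]].
  case: (detA _ _ _ _ _ _ _ _ EA EA2) => ? ? ->; subst.
  by case: (detB _ _ _ _ _ _ _ _ EB EB2) => -> -> ->.
- move=> n m n' m' A detA B detB i s o s' t o2 s2 t2.
  case/exec_par_inv => -[i0 [j [-> -> E]]] /exec_par_inv [] [i1 [j1 [Ei -> E1]]].
  + by move/lshift_inj: Ei E1 => <- /(detA _ _ _ _ _ _ _ _ E) [-> -> ->].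
  + by case: (lrshift_neq Ei).
  + by case: (lrshift_neq (esym Ei)).
  + by move/rshift_inj: Ei E1 => <- /(detB _ _ _ _ _ _ _ _ E) [-> -> ->].
- move=> n m k A detA i s j s' t j2 s2 t2 /exec_fb_inv F /exec_fb_inv F2.
  exact: (fbrun_functional detA F F2).
Qed.

Lemma exec_cost0_backward_unique n m (A : fc n m) : cost0_backward_unique (denote A).
Proof.
elim: A => {n m}.
- by move=> i s j s' i2 s2 s2' t _ _; rewrite (ord1 i) (ord1 i2).
- by move=> x e i s j s' i2 s2 s2' t /exec_assign_inv[].
- by move=> i s j s' i2 s2 s2' t /exec_join_inv[].
- move=> i s j s' i2 s2 s2' t /exec_twist_inv[-> _ _] /exec_twist_inv[Ej _ _].
  exact/esym/(rev_ord_inj Ej).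
- by move=> b i s j s' i2 s2 s2' t /exec_cond_inv[].
- move=> n m p A uniqA B uniqB i s k s' i2 s2 s2' t.
  case/exec_seq_inv => [j [s1 [t1 [u [EA EB]]]]].
  move=> /esym/eqP; rewrite addn_eq0 => /andP[/eqP t0 /eqP u0].
  move=> /exec_seq_inv[j2 [s3 [t3 [u3 [EA2 EB2 _]]]]]; subst t1 u.
  rewrite (uniqB _ _ _ _ _ _ _ _ EB EB2) in EA2.
  exact: uniqA EA EA2.
- move=> n m n' m' A uniqA B uniqB i s o s' i2 s2 s2' t.
  case/exec_par_inv => -[i0 [j [-> -> E]]] /exec_par_inv [] [i1 [j1 [-> Ej E1]]].
  + by move/lshift_inj: Ej E1 => <- /(uniqA _ _ _ _ _ _ _ _ E) ->.
  + by case: (lrshift_neq Ej).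
  + by case: (lrshift_neq (esym Ej)).
  + by move/rshift_inj: Ej E1 => <- /(uniqB _ _ _ _ _ _ _ _ E) ->.
- move=> n m k A uniqA i s j s' i2 s2 s2' t /exec_fb_inv F /exec_fb_inv F2.
  have [z [s3 [s3' [t3 [Hz Ez]]]]] := fbrun_exit_reachable F2.
  case: (fbrun_cost0_reach F erefl uniqA Hz Ez) => [|[l /lrshift_neq //]].
  case/fb_reachE => [/lshift_inj //|].
  by case=> w _ [l [? [? [? [/lrshift_neq]]]]].
Qed.

Lemma nle_refl a : nle a a.
Proof. by case: a => /=. Qed.

Lemma nle_trans b a c : nle a b -> nle b c -> nle a c.
Proof. by case: a; case: b; case: c => //= x y z; apply: leq_trans. Qed.

Lemma nadd_le2l t a b : nle a b -> nle (nadd (Fin t) a) (nadd (Fin t) b).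
Proof. by case: a; case: b => //= x y; rewrite leq_add2l. Qed.

Lemma naddA t u a : nadd (Fin t) (nadd (Fin u) a) = nadd (Fin (t + u)) a.
Proof. by case: a => //= x; rewrite addnA. Qed.

Section RelativeRunningTime.

Variables (n m : nat) (f : Sem n m) (Q : pre m) (i : 'I_n) (s : Store).

Variant RRT_spec : ninf -> Prop :=
| RRTRun j s' t of f i s j s' t : RRT_spec (nadd (Fin t) (Q j s'))
| RRTStuck of (forall j s' t, ~ f i s j s' t) : RRT_spec Inf.

Lemma RRTP : RRT_spec (RRT f Q i s).
Proof.
rewrite /RRT; case: excluded_middle_informative => [h|h].
- by case: constructive_indefinite_description => [[[j s'] t] /= H]; constructor.
- by constructor=> j s' t H; apply: h; exists (j, s', t).
Qed.

Lemma RRT_run j s' t : functional f -> f i s j s' t -> RRT f Q i s = nadd (Fin t) (Q j s').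
Proof.
move=> detf E; case: RRTP => [j2 s2 t2 E2|stuck]; last by case: (stuck _ _ _ E).
by case: (detf _ _ _ _ _ _ _ _ E E2) => -> -> ->.
Qed.

Lemma RRT_stuck : (forall j s' t, ~ f i s j s' t) -> RRT f Q i s = Inf.
Proof. by move=> stuck; case: RRTP => // j s' t /stuck. Qed.

End RelativeRunningTime.

Lemma RRT_mono n m (f : Sem n m) Q Q' i s :
  (forall j s', nle (Q j s') (Q' j s')) -> nle (RRT f Q i s) (RRT f Q' i s).
Proof.
by move=> leQ; rewrite /RRT; case: excluded_middle_informative => //= h; apply: nadd_le2l.
Qed.

Lemma RRT_seq n m p (A : fc n m) (B : fc m p) R i s :
  RRT (denote (Seq A B)) R i s = RRT (denote A) (RRT (denote B) R) i s.
Proof.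
have detAB := @exec_functional _ _ (Seq A B).
case: (RRTP (denote A) (RRT (denote B) R) i s) => [j s1 t EA|stuckA]; last first.
  by apply: RRT_stuck => k s' u /exec_seq_inv[j [s1 [t [t2 [/stuckA]]]]].
case: (RRTP (denote B) R j s1) => [k s2 u EB|stuckB].
  by rewrite naddA (RRT_run _ detAB (exec_seq EA EB)).
apply: RRT_stuck => k s2 u /exec_seq_inv[j2 [s3 [t2 [u2 [EA2 EB2 _]]]]].
by case: (exec_functional EA EA2) EB2 => -> -> _ /stuckB.
Qed.

Lemma RRT_parl n m n' m' (A : fc n m) (B : fc n' m') R i s :
  RRT (denote (Par A B)) R (lshift n' i) s = RRT (denote A) (pleft R) i s.
Proof.
case: (RRTP (denote A) (pleft R) i s) => [j s1 t EA|stuckA].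
  exact: RRT_run _ (@exec_functional _ _ (Par A B)) (exec_parl B EA).
apply: RRT_stuck => o s1 t /exec_par_inv[[i0 [j [/lshift_inj <- _ /stuckA]]]|[i0 [j [Ei]]]] //.
by case: (lrshift_neq Ei).
Qed.

Lemma RRT_parr n m n' m' (A : fc n m) (B : fc n' m') R i s :
  RRT (denote (Par A B)) R (rshift n i) s = RRT (denote B) (pright R) i s.
Proof.
case: (RRTP (denote B) (pright R) i s) => [j s1 t EB|stuckB].
  exact: RRT_run _ (@exec_functional _ _ (Par A B)) (exec_parr A EB).
apply: RRT_stuck => o s1 t /exec_par_inv[[i0 [j [Ei]]]|[i0 [j [/rshift_inj <- _ /stuckB]]]] //.
by case: (lrshift_neq (esym Ei)).
Qed.

Lemma HT_seq n m p (A : fc n m) (B : fc m p) (P : pre n) (R : pre p) :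
  HT (denote (Seq A B)) P R <-> rel_comp (HT (denote A)) (HT (denote B)) P R.
Proof.
split=> [H|[Q [HA HB]] i s].
- exists (RRT (denote B) R); split=> i s; last exact: nle_refl.
  by rewrite -RRT_seq; apply: H.
- by rewrite RRT_seq; apply: nle_trans (HA i s); apply: RRT_mono.
Qed.

Lemma HT_par n m n' m' (A : fc n m) (B : fc n' m') (P : pre (n + n')) (R : pre (m + m')) :
  HT (denote (Par A B)) P R <-> rel_prod (HT (denote A)) (HT (denote B)) P R.
Proof.
split=> [H|[HA HB] x s].
- by split=> i s; [rewrite -(RRT_parl A B) | rewrite -(RRT_parr A B)]; apply: H.
- by case: (lrP x) => [i|j]; [rewrite RRT_parl; apply: HA | rewrite RRT_parr; apply: HB].
Qed.

Section Cycles.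

Variables (T : finType) (e : rel T).

Definition on_cycle x := [exists y, e x y && connect e y x].

Lemma connect_card_lt x y : e x y -> ~~ on_cycle x -> #|connect e y| < #|connect e x|.
Proof.
rewrite /on_cycle => exy xNcyc; apply/proper_card/properP; split.
  by apply/subsetP => z; apply: connect_trans (connect1 exy).
exists x; first exact: connect0.
by apply: contra xNcyc => yx; apply/existsP; exists y; rewrite exy.
Qed.

Lemma on_cycle_pred x : on_cycle x -> exists2 p, e p x & on_cycle p.
Proof.
rewrite /on_cycle; case/existsP => y /andP[exy /connectP[q]].
elim/last_ind: q => [_ /= xy|q z _].
  by subst x; exists y => //; apply/existsP; exists y; rewrite exy connect0.
rewrite rcons_path last_rcons => /andP[yq ez] xz; subst x; exists (last y q) => //.
by apply/existsP; exists z; rewrite ez; apply/connectP; exists (y :: q); rewrite //= exy.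
Qed.

End Cycles.

Lemma fbrun_cost_bound n m k (A : fc (n + k) (m + k)) x s j s' t :
  fbrun A x s j s' t -> forall P Q R, HT (denote A) (pjoin P Q) (pjoin R Q) ->
  nle (nadd (Fin t) (R j s')) (pjoin P Q x s).
Proof.
elim => {n m k A x s j s' t}.
- move=> n m k A x s j s' t E P Q R HA.
  by have := HA x s; rewrite (RRT_run _ (@exec_functional _ _ A) E) pjoin_l.
- move=> n m k A x s l s1 t j s' u E _ IH P Q R HA.
  have := HA x s; rewrite (RRT_run _ (@exec_functional _ _ A) E) pjoin_r -naddA.
  by apply: nle_trans; apply: nadd_le2l; have := IH P Q R HA; rewrite pjoin_r.
Qed.

Section Feedback.

Variables (n m k : nat) (A : fc (n + k) (m + k)).

Let detA : functional (denote A) := @exec_functional _ _ A.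
Let detF : functional (fbrun A) := fbrun_functional detA.

Lemma RRT_fb R i s : RRT (denote (Fb A)) R i s = RRT (fbrun A) R (lshift k i) s.
Proof.
case: (RRTP (fbrun A) R (lshift k i) s) => [j s' t F|stuck].
  exact: RRT_run _ (@exec_functional _ _ (Fb A)) (exec_fb F).
by apply: RRT_stuck => j s' t /exec_fb_inv /stuck.
Qed.

Definition fb_rrt (R : pre m) : pre k := fun l => RRT (fbrun A) R (rshift n l).

Lemma RRT_fb_rrt R x s : RRT (denote A) (pjoin R (fb_rrt R)) x s = RRT (fbrun A) R x s.
Proof.
case: (RRTP (denote A) (pjoin R (fb_rrt R)) x s) => [o s1 t E|stuck]; last first.
  by rewrite RRT_stuck // => j s' t /fbrun_inv[/stuck|[l [s1 [t1 [u [/stuck]]]]]].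
case: (lrP o) E => [j|l] E.
  by rewrite pjoin_l (RRT_run _ detF (fb_done E)).
rewrite pjoin_r /fb_rrt.
case: (RRTP (fbrun A) R (rshift n l) s1) => [j s' u F|stuck].
  by rewrite naddA (RRT_run _ detF (fb_again E F)).
rewrite /= RRT_stuck // => j s' u /fbrun_inv[E2|[l2 [s2 [t2 [u2 [E2 F2 _]]]]]].
  by case: (detA E E2) => /lrshift_neq.
by case: (detA E E2) F2 => /rshift_inj -> -> _ /stuck.
Qed.

Definition zero_step : rel 'I_k := fun l l' =>
  if excluded_middle_informative (exists s s', exec A (rshift n l) s (rshift m l') s' 0)
  then true else false.

Lemma zero_stepP l l' :
  reflect (exists s s', exec A (rshift n l) s (rshift m l') s' 0) (zero_step l l').
Proof. by rewrite /zero_step; case: excluded_middle_informative => h; constructor. Qed.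

Lemma exec_into_zero_cycle y s l s' t :
  exec A y s (rshift m l) s' t -> on_cycle zero_step l ->
  exists2 p, y = rshift n p & on_cycle zero_step p.
Proof.
move=> Ey /on_cycle_pred[p /zero_stepP[s0 [s0' E0]] pcyc]; exists p => //.
exact: exec_cost0_backward_unique E0 Ey.
Qed.

Section Soundness.

Variables (P : pre n) (Q : pre k) (R : pre m).
Hypothesis HA : HT (denote A) (pjoin P Q) (pjoin R Q).

Lemma fb_first_step x s N : pjoin P Q x s = Fin N ->
  (exists j s' t, exec A x s (lshift k j) s' t) \/
  exists l s' t N', [/\ exec A x s (rshift m l) s' t, Q l s' = Fin N' & t + N' <= N].
Proof.
move=> EN; have := HA x s; rewrite EN.
case: (RRTP (denote A) (pjoin R Q) x s) => [o s' t|_ []].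
case: (lrP o) => [j|l] E; first by left; exists j, s', t.
by rewrite pjoin_r; case EQ: (Q l s') => [N'|] //= le; right; exists l, s', t, N'.
Qed.

Lemma fbrun_terminates l s N : Q l s = Fin N -> ~~ on_cycle zero_step l ->
  exists j s' t, fbrun A (rshift n l) s j s' t.
Proof.
elim/ltn_ind: N l s => N IHN l.
move cl: #|connect zero_step l| => c; elim/ltn_ind: c l cl => c IHc l cl s QN lNcyc.
have := @fb_first_step (rshift n l) s N; rewrite pjoin_r => /(_ QN).
case=> [[j [s' [t E]]]|[a [s1 [t [N' [E Qa le]]]]]].
  by exists j, s', t; apply: fb_done E.
have aNcyc : ~~ on_cycle zero_step a.
  by apply: contra lNcyc => /(exec_into_zero_cycle E)[p /rshift_inj ->].
suff [j [s' [u F]]] : exists j s' u, fbrun A (rshift n a) s1 j s' u.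
  by exists j, s', (t + u); apply: fb_again E F.
case: (ltnP N' N) => [ltN|geN]; first exact: IHN ltN a s1 Qa aNcyc.
have [t0 eN] : t = 0 /\ N' = N by lia.
subst t N' c; have la : zero_step l a by apply/zero_stepP; exists s, s1.
exact: IHc _ (connect_card_lt la lNcyc) a erefl s1 Qa aNcyc.
Qed.

Lemma HT_fb_sound : HT (denote (Fb A)) P R.
Proof.
move=> i s; rewrite RRT_fb.
case: (RRTP (fbrun A) R (lshift k i) s) => [j s' t F|stuck].
  by have := fbrun_cost_bound F HA; rewrite pjoin_l.
case EP: (P i s) => [N|] //=.
have := @fb_first_step (lshift k i) s N; rewrite pjoin_l => /(_ EP).
case=> [[j [s' [t E]]]|[a [s1 [t [N' [E Qa _]]]]]]; first exact: stuck (fb_done E).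
have aNcyc : ~~ on_cycle zero_step a.
  by apply/negP => /(exec_into_zero_cycle E)[p /lrshift_neq].
have [j [s' [u F]]] := fbrun_terminates Qa aNcyc.
exact: stuck (fb_again E F).
Qed.

End Soundness.

Lemma HT_fb P R :
  HT (denote (Fb A)) P R <-> exists Q, HT (denote A) (pjoin P Q) (pjoin R Q).
Proof.
split=> [H|[Q HA]]; last exact: HT_fb_sound HA.
exists (fb_rrt R) => x s; rewrite RRT_fb_rrt.
case: (lrP x) => [i|l]; first by rewrite pjoin_l -RRT_fb; apply: H.
by rewrite pjoin_r; apply: nle_refl.
Qed.

End Feedback.

Theorem theorem4p3 :
  (forall n m p (A : fc n m) (B : fc m p) (P : pre n) (R : pre p),
      HT (denote (Seq A B)) P R <-> rel_comp (HT (denote A)) (HT (denote B)) P R)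
  /\
  (forall n m n' m' (A : fc n m) (B : fc n' m') (P : pre (n + n')) (R : pre (m + m')),
      HT (denote (Par A B)) P R <-> rel_prod (HT (denote A)) (HT (denote B)) P R)
  /\
  (forall n m k (A : fc (n + k) (m + k)) (P : pre n) (R : pre m),
      HT (denote (Fb A)) P R <->
      exists Q : pre k, HT (denote A) (pjoin P Q) (pjoin R Q)).
Proof. by split; [exact: HT_seq | split; [exact: HT_par | exact: HT_fb]]. Qed.
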